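(* Let $n\ge 2$ and let $\overrightarrow{K_{1,n}}$ be an orientation of the star $K_{1,n}$. Then $\overrightarrow{K_{1,n}}$ is $\{0,1,2\}$-antimagic if and only if its center is neither a source nor a sink.
   Context: An oriented graph $\overrightarrow{G}$ is a directed graph obtained from a simple undirected graph by giving each edge one direction. For vertices $u,v$, $d(u,v)$ is the length of a shortest directed path from $u$ to $v$ ($d(u,u)=0$, and $d(u,v)=\infty$ if there is no such path). Let $\partial=\max\{d(u,v)<\infty : u,v\in V(\overrightarrow{G})\}$. A distance set is a nonempty $D\subseteq\{0,1,\dots,\partial\}$. The $D$-neighborhood of $u$ is $N_D(u)=\{v : d(u,v)\in D\}$. For a bijection $f:V(\overrightarrow{G})\to\{1,\dots,|V(\overrightarrow{G})|\}$, the $D$-weight of $u$ is $\omega_D(u)=\sum_{v\in N_D(u)} f(v)$. $\overrightarrow{G}$ is $D$-antimagic if $D\subseteq\{0,\dots,\partial\}$ (so $\{0,1,2\}$-antimagic requires $\partial\ge 2$) and there is such a bijection $f$ with all $D$-weights pairwise distinct. The center of $\overrightarrow{K_{1,n}}$ is its vertex of degree $n$; a source is a vertex of in-degree $0$ and a sink a vertex of out-degree $0$. *)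

From mathcomp Require Import all_boot.
Set Implicit Arguments. Unset Strict Implicit. Unset Printing Implicit Defensive.

Section Digraph.
Variables (T : finType) (arc : rel T).

Definition walk_len (k : nat) (u v : T) : Prop :=
  exists s : seq T, [/\ size s = k, path arc u s & last u s = v].

Definition dist_is (u v : T) (k : nat) : Prop :=
  walk_len k u v /\ forall j, j < k -> ~ walk_len j u v.

(* k <= \partial, where \partial = max of finite distances *)
Definition le_diam (k : nat) : Prop :=
  exists u v j, dist_is u v j /\ k <= j.

Definition NbD (D : pred nat) (u v : T) : Prop :=
  exists2 k, D k & dist_is u v k.

Definition labeling (f : T -> nat) : Prop :=
  injective f /\ forall x, 0 < f x <= #|T|.

Definition is_weight (D : pred nat) (f : T -> nat) (u : T) (w : nat) : Prop :=
  exists A : {set T}, (forall v, v \in A <-> NbD D u v) /\ w = \sum_(v in A) f v.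

Definition antimagic (D : pred nat) : Prop :=
  (exists k, D k) /\ (forall k, D k -> le_diam k) /\
  exists f, labeling f /\
    forall u u' w w', is_weight D f u w -> is_weight D f u' w' -> w = w' -> u = u'.

Definition source (x : T) : Prop := forall y, ~~ arc y x.
Definition sink (x : T) : Prop := forall y, ~~ arc x y.
End Digraph.

(* Orientation of the star K_{1,n}: vertex None is the center, Some i the
   leaves; o i = true means the edge is oriented center -> leaf i. *)
Definition star_arc (n : nat) (o : 'I_n -> bool) : rel (option 'I_n) :=
  fun x y => match x, y with
             | None, Some i => o i
             | Some i, None => ~~ o i
             | _, _ => false
             end.

Definition D012 : pred nat := fun k => k <= 2.

(* When the centre c is neither a source nor a sink, the {0,1,2}-neighbourhoods
   are forced by the orientation: an out-leaf sees only itself, c sees itself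
   and the out-leaves, and an in-leaf sees itself together with everything c
   sees.  Hence for ANY labeling the out-leaves weigh less than c, which weighs
   less than every in-leaf, and within each class the weights differ because the
   labels do; a path in-leaf -> c -> out-leaf gives diameter 2.  Conversely a
   distance 2 needs two consecutive arcs, which in a star must pass through c. *)

From Stdlib Require Import Classical.
From mathcomp Require Import all_boot.
From mathcomp Require Import zify.

Set Implicit Arguments. Unset Strict Implicit. Unset Printing Implicit Defensive.

Section Digraph.
Variables (T : finType) (arc : rel T).

Lemma walk_len0 u v : walk_len arc 0 u v <-> u = v.
Proof.
split=> [[s [/size0nil -> _ <-]] //|<-].
by exists [::].
Qed.

Lemma walk_len1 u v : walk_len arc 1 u v <-> arc u v.
Proof.
split=> [[s [size_s]]|uv]; last by exists [:: v]; rewrite /= uv.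
by case: s size_s => [|x [|//]] //= _; rewrite andbT => + <-.
Qed.

Lemma walk_len2 u v : walk_len arc 2 u v <-> exists x, arc u x && arc x v.
Proof.
split=> [[s [size_s]]|[x /andP[ux xv]]]; last by exists [:: x; v]; rewrite /= ux xv.
case: s size_s => [|x [|y [|//]]] //= _.
by rewrite andbT => /andP[ux xy] <-; exists x; rewrite ux.
Qed.

Lemma walk_len_dist u v k :
  walk_len arc k u v -> exists2 j, j <= k & dist_is arc u v j.
Proof.
elim/ltn_ind: k => k IH wk.
case: (classic (exists2 j, j < k & walk_len arc j u v)) => [[j ltjk wj]|shortest].
  by have [i leij dij] := IH j ltjk wj; exists i => //; lia.
by exists k => //; split=> // j ltjk wj; apply: shortest; exists j.
Qed.

Lemma dist_is2 u v :
  walk_len arc 2 u v -> u != v -> ~~ arc u v -> dist_is arc u v 2.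
Proof.
move=> w2 /eqP neq_uv not_uv; split=> // -[|[|//]] _.
  by move/walk_len0.
by move/walk_len1; apply/negP.
Qed.

Lemma le_diam2_two_arcs :
  le_diam arc 2 -> exists a b c, arc a b && arc b c.
Proof.
case=> u [_ [j [[[s [size_s path_s _]] _] le2j]]].
case: s size_s path_s => [|a [|b s]] /= size_s; try by rewrite -size_s in le2j.
by case/and3P=> ua ab _; exists u, a, b; rewrite ua ab.
Qed.

Definition reach2 u v : bool :=
  [|| u == v, arc u v | [exists x, arc u x && arc x v]].

Definition ball2 u : {set T} := [set v | reach2 u v].

Lemma NbD_D012 u v : NbD arc D012 u v <-> reach2 u v.
Proof.
split=> [[k le_k2 [wk _]]|reach_uv].
  apply/or3P; case: k le_k2 wk => [|[|[|//]]] _.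
  - by move/walk_len0 ->; apply: Or31.
  - by move/walk_len1; apply: Or32.
  - by move/walk_len2/existsP; apply: Or33.
have [k le_k2 wk] : exists2 k, k <= 2 & walk_len arc k u v.
  case/or3P: reach_uv => [/eqP <-|uv|/existsP w2].
  - by exists 0 => //; apply/walk_len0.
  - by exists 1 => //; apply/walk_len1.
  - by exists 2 => //; apply/walk_len2.
have [j le_jk dj] := walk_len_dist wk.
by exists j => //; apply: leq_trans le_k2.
Qed.

Lemma is_weight_D012 f u w :
  is_weight arc D012 f u w -> w = \sum_(v in ball2 u) f v.
Proof.
case=> A [memA ->]; suff -> : A = ball2 u by [].
apply/setP => v; rewrite inE.
by apply/idP/idP => [/memA/NbD_D012|/NbD_D012/memA].
Qed.

End Digraph.

Lemma labeling_enum_rank (T : finType) : labeling (fun v : T => (enum_rank v).+1).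
Proof. by split=> [x y [/val_inj/enum_rank_inj]|x] /=. Qed.

Section Star.
Variables (n : nat) (o : 'I_n -> bool).
Local Notation arc := (star_arc o).

Lemma star_two_arcs a b c :
  arc a b -> arc b c -> ~ source arc None /\ ~ sink arc None.
Proof.
case: a b c => [i|] [j|] [k|] //= ab bc.
  by split=> [src|snk]; [have := src (Some i) | have := snk (Some k)];
     rewrite /= ?ab ?bc.
by rewrite ab in bc.
Qed.

Lemma star_not_source_center : ~ source arc None -> exists j, ~~ o j.
Proof.
move=> not_src; apply/existsP; rewrite -negb_forall; apply/negP => /forallP all_out.
by apply: not_src => -[i|] //=; rewrite all_out.
Qed.

Lemma star_not_sink_center : ~ sink arc None -> exists i, o i.
Proof.
move=> not_snk; apply/existsP; case: (boolP [exists i, o i]) => //.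
by rewrite negb_exists => /forallP all_in; case: not_snk => -[i|] //=.
Qed.

Lemma star_dist_in_out i j : o i -> ~~ o j -> dist_is arc (Some j) (Some i) 2.
Proof.
move=> oi oj; apply: dist_is2 => //.
  by apply/walk_len2; exists None; rewrite /= oi oj.
by apply: contraNneq oj => -[->].
Qed.

Lemma mem_ball2_center v : (v \in ball2 arc None) = (v == None) || arc None v.
Proof.
rewrite inE /reach2; case: v => [k|] //=; case: (o k) => //=.
by apply/existsP => -[[m|] //=]; rewrite andbF.
Qed.

Lemma ball2_out_leaf i : o i -> ball2 arc (Some i) = [set Some i].
Proof.
move=> oi; apply/setP => v; rewrite !inE /reach2.
have -> : [exists x, arc (Some i) x && arc x v] = false.
  by apply/existsP => -[[m|] //=]; rewrite oi.
by case: v => [k|] /=; rewrite orbF ?oi // eq_sym.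
Qed.

Lemma ball2_in_leaf j : ~~ o j -> ball2 arc (Some j) = Some j |: ball2 arc None.
Proof.
move=> oj; apply/setP => v; rewrite in_setU1 mem_ball2_center inE /reach2.
case: v => [k|] /=; last by rewrite oj.
rewrite [Some j == _]eq_sym; congr (_ || _); apply/existsP/idP.
  by case=> -[m|] //= /andP[_ ->].
by move=> ok; exists None; rewrite /= oj ok.
Qed.

Variable f : option 'I_n -> nat.

Definition star_weight (u : option 'I_n) := \sum_(v in ball2 arc u) f v.

Lemma star_weight_leaf i :
  star_weight (Some i) = f (Some i) + ~~ o i * star_weight None.
Proof.
rewrite /star_weight; case: (boolP (o i)) => oi.
  by rewrite ball2_out_leaf // big_set1 addn0.
by rewrite ball2_in_leaf // big_setU1 ?mem_ball2_center //= mul1n.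
Qed.

Lemma out_leaf_lt_center i :
  (forall v, 0 < f v) -> o i -> f (Some i) < star_weight None.
Proof.
move=> f_pos oi; rewrite /star_weight (bigD1 None) ?mem_ball2_center //.
rewrite (bigD1 (Some i)) /=; last by rewrite mem_ball2_center /= oi.
by have := f_pos None; lia.
Qed.

Lemma star_weight_inj : labeling f -> injective star_weight.
Proof.
move=> [f_inj f_range].
have f_pos v : 0 < f v by case/andP: (f_range v).
have leaf_ne_center i : star_weight (Some i) != star_weight None.
  rewrite star_weight_leaf; case: (boolP (o i)) => oi /=.
    by have := out_leaf_lt_center f_pos oi; lia.
  by have := f_pos (Some i); lia.
case=> [i|] [i'|] // eq_w; last first.
- by move: (leaf_ne_center i'); rewrite eq_w eqxx.
- by move: (leaf_ne_center i); rewrite eq_w eqxx.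
move: eq_w; rewrite !star_weight_leaf.
case: (boolP (o i)) => oi; case: (boolP (o i')) => oi' /=.
- by rewrite !addn0 => /f_inj ->.
- by have := out_leaf_lt_center f_pos oi; lia.
- by have := out_leaf_lt_center f_pos oi'; lia.
- by move/addIn/f_inj ->.
Qed.
End Star.

Theorem mainTheorem6 (n : nat) (hn : 2 <= n) (o : 'I_n -> bool) :
  antimagic (star_arc o) D012 <->
  (~ source (star_arc o) None /\ ~ sink (star_arc o) None).
Proof.
split=> [[_ [/(_ 2 isT)/le_diam2_two_arcs [a [b [c /andP[ab bc]]]] _]]|].
  exact: star_two_arcs ab bc.
case=> /star_not_source_center [j oj] /star_not_sink_center [i oi].
split; first by exists 0.
split=> [k le_k2|].
  by exists (Some j), (Some i), 2; split=> //; exact: star_dist_in_out.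
exists (fun v => (enum_rank v).+1); split; first exact: labeling_enum_rank.
move=> u u' w w' /is_weight_D012 -> /is_weight_D012 ->.
exact: star_weight_inj (labeling_enum_rank _) u u'.
Qed.
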